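(* There is an absolute constant $c>0$ such that for all $p\in(0,0.1)$, $$\mathbb{P}_p(E)\le \exp\big[-c\,q^{-1}(\log q^{-1})^2\big].$$
   Context: Let $q=-\log(1-p)$, $A=\lceil 1/\sqrt q\rceil$, $B=\lfloor q^{-1}\log q^{-1}\rfloor$. Under $\mathbb{P}_p$, the initial configuration assigns independent states to sites of $\mathbb{Z}^2$: the origin is active with probability $p$, else empty; every other site is occupied with probability $p$, else empty. A rectangle is $\{a,\dots,c\}\times\{b,\dots,d\}\subset\mathbb{Z}^2$ with dimensions $(c-a+1,d-b+1)$; columns are $\{x\}\times\{b,\dots,d\}$, rows $\{a,\dots,c\}\times\{y\}$. A rectangle has a double gap in the columns (resp. rows) if two consecutive columns (resp. rows) consist entirely of initially empty sites; $G(R)$ is the event that $R$ has no double gap in the columns or rows. $E$ is the union of $G(R)$ over all rectangles $R$ containing the origin with one dimension in $[B-A-10,B-A]$ and the other in $[1,A]$. *)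

From mathcomp Require Import all_boot all_algebra.
From mathcomp Require Import Rstruct.
From Stdlib Require Import Reals ZArith Classical ClassicalDescription.

Set Implicit Arguments.
Unset Strict Implicit.
Unset Printing Implicit Defensive.

Local Open Scope R_scope.

Definition qof (p : R) : R := - ln (1 - p).

(* floor and ceiling of a real, as integers.  Stdlib's [up x] is the unique
   integer with x < up x <= x + 1, so [up x - 1] is the floor of x. *)
Definition Zfloor (x : R) : Z := Z.sub (up x) Z.one.
Definition Zceil (x : R) : Z := Z.opp (Zfloor (- x)).

Definition Aof (p : R) : Z := Zceil (/ sqrt (qof p)).
Definition Bof (p : R) : Z := Zfloor (/ qof p * ln (/ qof p)).

Local Close Scope R_scope.
Local Open Scope Z_scope.

(* A configuration is described by the set [occ] of initially NON-empty
   sites (occupied, or active for the origin).  Only emptiness matters. *)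
Definition col_empty (occ : Z * Z -> Prop) (x b d : Z) : Prop :=
  forall y : Z, b <= y <= d -> ~ occ (x, y).
Definition row_empty (occ : Z * Z -> Prop) (y a c : Z) : Prop :=
  forall x : Z, a <= x <= c -> ~ occ (x, y).

Definition no_double_gap (occ : Z * Z -> Prop) (a b c d : Z) : Prop :=
  ~ (exists x : Z, a <= x < c /\ col_empty occ x b d /\ col_empty occ (x + 1) b d)
  /\ ~ (exists y : Z, b <= y < d /\ row_empty occ y a c /\ row_empty occ (y + 1) a c).

Definition event_E (A B : Z) (occ : Z * Z -> Prop) : Prop :=
  exists a b c d : Z,
    a <= 0 <= c /\ b <= 0 <= d /\
    ((B - A - 10 <= c - a + 1 <= B - A /\ 1 <= d - b + 1 <= A) \/
     (1 <= c - a + 1 <= A /\ B - A - 10 <= d - b + 1 <= B - A)) /\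
    no_double_gap occ a b c d.

Definition site (N : nat) := ('I_(N.*2.+1) * 'I_(N.*2.+1))%type.
Definition coord (N : nat) (s : site N) : Z * Z :=
  (Z.of_nat (nat_of_ord s.1) - Z.of_nat N, Z.of_nat (nat_of_ord s.2) - Z.of_nat N).

(* Set of non-empty sites of a box configuration (sites outside the box are
   irrelevant for the events considered and are treated as empty). *)
Definition occ_of (N : nat) (w : {ffun site N -> bool}) (z : Z * Z) : Prop :=
  exists s : site N, w s = true /\ coord s = z.

Local Close Scope Z_scope.
Local Open Scope ring_scope.

Definition prob_box (N : nat) (p : R) (Ev : (Z * Z -> Prop) -> Prop) : R :=
  \sum_(w : {ffun site N -> bool})
     (if excluded_middle_informative (Ev (occ_of w))
      then \prod_(s : site N) (if w s then p else 1 - p)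
      else 0).

(* Every rectangle in the definition of E lies in {-N..N}^2 for this N. *)
Definition boxN (p : R) : nat := Z.to_nat (Z.add (Z.abs (Aof p)) (Z.abs (Bof p))).

Definition PE (p : R) : R := prob_box (boxN p) p (event_E (Aof p) (Bof p)).

(* On E some rectangle around the origin, with long side about B ~ q^-1 log q^-1
   and short side at most A ~ q^-1/2, has no double gap.  Cutting its long side
   into disjoint pairs of consecutive lines, every pair contains an occupied
   site, so the rectangle contains about B/2 occupied sites among at most A B.
   An exponential Markov bound with tilt t = 1 + 1/(A p) makes this cost at
   most e^11 (e^2 A p)^(B/2) <= exp(-B log q^-1 / 8), and the union bound over
   the polynomially many rectangles of the box loses only exp(O(log q^-1)).
   When log q^-1 < 20 the box has bounded size, and since E excludes the empty
   configuration, P(E) <= 1 - (1 - p)^|box| is bounded away from 1. *)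

From Pilot Require Import Defs.
From mathcomp Require Import all_boot all_order all_algebra Rstruct zify.
From Stdlib Require Import Reals ZArith Lia Lra Classical ClassicalDescription.
Set Implicit Arguments. Unset Strict Implicit. Unset Printing Implicit Defensive.
Import Order.TTheory GRing.Theory Num.Theory.
Local Open Scope ring_scope.

Section BernoulliProduct.
Variables (S : finType) (p : R).
Hypotheses (p_ge0 : 0 <= p) (p_le1 : p <= 1).

Definition weight (w : {ffun S -> bool}) : R :=
  \prod_(s : S) (if w s then p else 1 - p).

Definition prob (P : {ffun S -> bool} -> Prop) : R :=
  \sum_w (if excluded_middle_informative (P w) then weight w else 0).

Lemma weight_ge0 w : 0 <= weight w.
Proof. by apply: prodr_ge0 => s _; case: (w s); rewrite ?subr_ge0. Qed.

Lemma sum_weight : \sum_w weight w = 1.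
Proof.
rewrite /weight -(bigA_distr_bigA (fun s b => if b then p else 1 - p)) /=.
by apply: big1 => s _; rewrite big_bool /= addrC subrK.
Qed.

Lemma prob_union (J : finType) (D : pred J) (P : {ffun S -> bool} -> Prop)
    (Q : J -> {ffun S -> bool} -> Prop) :
  (forall w, P w -> exists2 j, D j & Q j w) -> prob P <= \sum_(j | D j) prob (Q j).
Proof.
move=> PQ; rewrite /prob exchange_big /=; apply: ler_sum => w _.
case: (excluded_middle_informative (P w)) => [Pw | nPw]; last first.
  by apply: sumr_ge0 => j _; case: excluded_middle_informative => ? //; apply: weight_ge0.
have [j Dj Qjw] := PQ w Pw.
rewrite (bigD1 j) //=; case: excluded_middle_informative => ? //.
rewrite lerDl; apply: sumr_ge0 => i _.
by case: excluded_middle_informative => ? //; apply: weight_ge0.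
Qed.

Lemma prob_le_compl_empty P :
  ~ P [ffun => false] -> prob P <= 1 - (1 - p) ^+ #|S|.
Proof.
move=> P0; have weight0 : weight [ffun => false] = (1 - p) ^+ #|S|.
  by rewrite /weight -prodr_const; apply: eq_bigr => s _; rewrite ffunE.
rewrite -{1}sum_weight (bigD1 [ffun => false]) //= weight0 addrAC subrr add0r.
rewrite /prob (bigD1 [ffun => false]) //=; case: excluded_middle_informative => ? //.
rewrite add0r; apply: ler_sum => w _.
by case: excluded_middle_informative => ? //; apply: weight_ge0.
Qed.

(* Chernoff bound: since [weight] is a product, the exponential moment of the
   number of occupied sites of [U] factorizes over the sites. *)
Lemma prob_card_ge (U : {set S}) (m : nat) (t : R) : 1 <= t ->
  prob (fun w => m <= #|[set s in U | w s]|)%nat * t ^+ m <= (1 + p * (t - 1)) ^+ #|U|.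
Proof.
move=> t_ge1; have t_ge0 : 0 <= t by apply: le_trans t_ge1.
pose G s (b : bool) := (if b then p else 1 - p) * (if (s \in U) && b then t else 1).
have weightG (w : {ffun S -> bool}) : \prod_s G s (w s) = weight w * t ^+ #|[set s in U | w s]|.
  rewrite big_split /= -big_mkcond /= prodr_const; congr (_ * _ ^+ _).
  by apply: eq_card => s; rewrite inE.
apply: (@le_trans _ _ (\sum_(w : {ffun S -> bool}) \prod_s G s (w s))).
  rewrite /prob mulr_suml; apply: ler_sum => w _; rewrite weightG.
  case: excluded_middle_informative => [m_le | m_gt].
    by apply: ler_wpM2l; [apply: weight_ge0 | apply: ler_weXn2l].
  by rewrite mul0r mulr_ge0 ?exprn_ge0 ?weight_ge0.
rewrite -bigA_distr_bigA /=.
rewrite (eq_bigr (fun s => if s \in U then 1 + p * (t - 1) else 1)) => [|s _].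
  by rewrite -big_mkcond prodr_const.
rewrite big_bool /G andbT andbF /= mulr1.
by case: (s \in U); rewrite ?mulr1 ?(addrC p) ?subrK // mulrBr mulr1 [RHS]addrCA.
Qed.
End BernoulliProduct.

Local Open Scope Z_scope.

Lemma card_ge_of_pairs (S : finType) (U : {set S}) (f : S -> Z) (x0 : Z) (m : nat) :
  (forall k : nat, (k < m)%nat -> exists s,
     [&& s \in U, (x0 + 2 * Z.of_nat k <=? f s) & (f s <=? x0 + 2 * Z.of_nat k + 1)]) ->
  (m <= #|U|)%nat.
Proof.
case: m => [//|m] hU; have [s0 _] := hU 0%nat isT.
pose P (k : 'I_m.+1) s :=
  [&& s \in U, (x0 + 2 * Z.of_nat k <=? f s) & (f s <=? x0 + 2 * Z.of_nat k + 1)].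
pose sel k := odflt s0 [pick s | P k s].
have selP k : P k (sel k).
  rewrite /sel; case: pickP => [s //|noP]; have [s Ps] := hU k (ltn_ord k).
  by move: Ps; rewrite -/(P k s) noP.
have sel_inj : injective sel.
  move=> k k' eq_sel; apply: ord_inj; move: (selP k) (selP k'); rewrite -eq_sel.
  by case/and3P => _ ? ? /and3P [_ ? ?]; lia.
rewrite -[m.+1]card_ord -(card_imset _ sel_inj); apply: subset_leq_card.
by apply/subsetP => _ /imsetP [k _ ->]; case/and3P: (selP k).
Qed.

Lemma coord_inj N : injective (@Defs.coord N).
Proof.
move=> [i j] [i' j'] [eq1 eq2].
by congr pair; apply: ord_inj; lia.
Qed.

Definition rect N (a b c d : Z) : {set site N} :=
  [set s | [&& a <=? (Defs.coord s).1, (Defs.coord s).1 <=? c,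
               b <=? (Defs.coord s).2 & (Defs.coord s).2 <=? d]].

Lemma card_rect N a b c d :
  (#|rect N a b c d| <= Z.to_nat (c - a + 1) * Z.to_nat (d - b + 1))%nat.
Proof.
pose g (s : site N) := (Z.to_nat ((Defs.coord s).1 - a), Z.to_nat ((Defs.coord s).2 - b)).
rewrite -(size_iota 0 (Z.to_nat (c - a + 1))) -(size_iota 0 (Z.to_nat (d - b + 1))).
rewrite -(size_allpairs pair) cardE -(size_map g); apply: uniq_leq_size.
  rewrite map_inj_in_uniq ?enum_uniq // => s s'; rewrite !mem_enum !inE /g /Defs.coord /=.
  case/and4P=> ? ? ? ? /and4P [? ? ? ?] [? ?].
  by apply: coord_inj; rewrite /Defs.coord; congr pair; lia.
move=> x /mapP [s]; rewrite mem_enum inE /Defs.coord /= => /and4P [? ? ? ?] ->.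
by apply/allpairsP; exists (g s); rewrite !mem_iota /=; split=> //; lia.
Qed.

Lemma occupied_of_not_col_empty N (w : {ffun site N -> bool}) x b d :
  ~ col_empty (occ_of w) x b d ->
  exists2 s, w s & (Defs.coord s).1 = x /\ b <= (Defs.coord s).2 <= d.
Proof.
move=> nempty; apply: NNPP => noocc; apply: nempty => y hy [s [ws eqs]].
by apply: noocc; exists s; rewrite ?eqs.
Qed.

Lemma occupied_of_not_row_empty N (w : {ffun site N -> bool}) y a c :
  ~ row_empty (occ_of w) y a c ->
  exists2 s, w s & (Defs.coord s).2 = y /\ a <= (Defs.coord s).1 <= c.
Proof.
move=> nempty; apply: NNPP => noocc; apply: nempty => x hx [s [ws eqs]].
by apply: noocc; exists s; rewrite ?eqs.
Qed.

Lemma card_occupied_rect_cols N (w : {ffun site N -> bool}) a b c d (m : nat) :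
  2 * Z.of_nat m <= c - a + 1 -> no_double_gap (occ_of w) a b c d ->
  (m <= #|[set s in rect N a b c d | w s]|)%nat.
Proof.
move=> long [nogap _]; apply: (@card_ge_of_pairs _ _ (fun s => (Defs.coord s).1) a) => k lt_km.
have [x_occ | x1_occ] : ~ col_empty (occ_of w) (a + 2 * Z.of_nat k) b d \/
                       ~ col_empty (occ_of w) (a + 2 * Z.of_nat k + 1) b d.
- apply: not_and_or => -[??]; apply: nogap; exists (a + 2 * Z.of_nat k); split=> //; lia.
- have [s ws [eqx hy]] := occupied_of_not_col_empty x_occ.
  by exists s; rewrite !inE ws andbT; repeat (apply/andP; split); lia.
- have [s ws [eqx hy]] := occupied_of_not_col_empty x1_occ.
  by exists s; rewrite !inE ws andbT; repeat (apply/andP; split); lia.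
Qed.

Lemma card_occupied_rect_rows N (w : {ffun site N -> bool}) a b c d (m : nat) :
  2 * Z.of_nat m <= d - b + 1 -> no_double_gap (occ_of w) a b c d ->
  (m <= #|[set s in rect N a b c d | w s]|)%nat.
Proof.
move=> long [_ nogap]; apply: (@card_ge_of_pairs _ _ (fun s => (Defs.coord s).2) b) => k lt_km.
have [y_occ | y1_occ] : ~ row_empty (occ_of w) (b + 2 * Z.of_nat k) a c \/
                       ~ row_empty (occ_of w) (b + 2 * Z.of_nat k + 1) a c.
- apply: not_and_or => -[??]; apply: nogap; exists (b + 2 * Z.of_nat k); split=> //; lia.
- have [s ws [eqy hx]] := occupied_of_not_row_empty y_occ.
  by exists s; rewrite !inE ws andbT; repeat (apply/andP; split); lia.
- have [s ws [eqy hx]] := occupied_of_not_row_empty y1_occ.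
  by exists s; rewrite !inE ws andbT; repeat (apply/andP; split); lia.
Qed.

Lemma event_E_empty A B N :
  12 <= B - A -> ~ event_E A B (occ_of (N := N) [ffun => false]).
Proof.
have empty z : ~ occ_of (N := N) [ffun => false] z by case=> s []; rewrite ffunE.
move=> gap [a [b [c [d [_ [_ [dims [nocols norows]]]]]]]].
case: dims => [[long _] | [_ long]].
- by apply: nocols; exists a; split; [lia | split=> y _; apply: empty].
- by apply: norows; exists b; split; [lia | split=> x _; apply: empty].
Qed.

Lemma site_of_coord N x y :
  - Z.of_nat N <= x <= Z.of_nat N -> - Z.of_nat N <= y <= Z.of_nat N ->
  exists s : site N, Defs.coord s = (x, y).
Proof.
move=> hx hy.
have hi : (Z.to_nat (x + Z.of_nat N) < N.*2.+1)%nat by rewrite -addnn; lia.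
have hj : (Z.to_nat (y + Z.of_nat N) < N.*2.+1)%nat by rewrite -addnn; lia.
by exists (Ordinal hi, Ordinal hj); rewrite /Defs.coord /=; congr pair; lia.
Qed.

Definition rect_of N (j : site N * site N) : {set site N} :=
  rect N (Defs.coord j.1).1 (Defs.coord j.1).2 (Defs.coord j.2).1 (Defs.coord j.2).2.

Lemma event_E_cover A B N (m : nat) (w : {ffun site N -> bool}) :
  Z.abs A + Z.abs B <= Z.of_nat N -> 2 * Z.of_nat m <= B - A - 10 ->
  event_E A B (occ_of w) ->
  exists2 j, (#|rect_of j| <= Z.to_nat ((B - A) * A))%nat &
             (m <= #|[set s in rect_of j | w s]|)%nat.
Proof.
move=> hN hm [a [b [c [d [ha [hb [dims G]]]]]]].
have [s1 eq1] : exists s : site N, Defs.coord s = (a, b) by apply: site_of_coord; lia.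
have [s2 eq2] : exists s : site N, Defs.coord s = (c, d) by apply: site_of_coord; lia.
have rect_s12 : rect_of (s1, s2) = rect N a b c d by rewrite /rect_of eq1 eq2.
exists (s1, s2); rewrite rect_s12.
  apply: leq_trans (card_rect N a b c d) _; case: dims => dims; nia.
case: dims => [[long _] | [_ long]].
- by apply: card_occupied_rect_cols G; lia.
- by apply: card_occupied_rect_rows G; lia.
Qed.

Local Close Scope Z_scope.

Lemma prob_box_event_E_le A B N (m : nat) (p t : R) :
  0 <= p -> p <= 1 -> 1 <= t ->
  (Z.abs A + Z.abs B <= Z.of_nat N)%Z -> (2 * Z.of_nat m <= B - A - 10)%Z ->
  prob_box N p (event_E A B) <=
  #|{: site N * site N}|%:R * ((1 + p * (t - 1)) ^+ Z.to_nat ((B - A) * A) / t ^+ m).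
Proof.
move=> p_ge0 p_le1 t_ge1 hN hm; rewrite /prob_box -/(prob p _).
set n := Z.to_nat _; set bound := _ / _.
have base_ge1 : 1 <= 1 + p * (t - 1) by rewrite lerDl mulr_ge0 // subr_ge0.
have tm_gt0 : 0 < t ^+ m by rewrite exprn_gt0 // (lt_le_trans ltr01).
have bound_ge0 : 0 <= bound.
  by apply: divr_ge0 (ltW tm_gt0); rewrite exprn_ge0 // (le_trans ler01).
apply: le_trans (prob_union p_ge0 p_le1 (D := fun j => (#|rect_of j| <= n)%nat)
  (Q := fun j w => (m <= #|[set s in rect_of j | w s]|)%nat)
  (fun w => event_E_cover (w := w) hN hm)) _.
apply: le_trans (_ : \sum_(j | (#|rect_of j| <= n)%nat) bound <= _).
  apply: ler_sum => j small; rewrite ler_pdivlMr //.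
  apply: le_trans (prob_card_ge p_ge0 p_le1 _ _ t_ge1) _.
  exact: ler_weXn2l.
rewrite sumr_const mulrC mulr_natr; apply: ler_wpMn2l => //.
by rewrite max_card.
Qed.

Local Close Scope ring_scope.
Local Open Scope R_scope.

Lemma exp_le_compat x y : x <= y -> exp x <= exp y.
Proof. by case/Rle_lt_or_eq_dec => [/exp_increasing/Rlt_le | ->] //; apply: Rle_refl. Qed.

Lemma ln_le_compat x y : 0 < x -> x <= y -> ln x <= ln y.
Proof.
by move=> x_gt0; case/Rle_lt_or_eq_dec => [/(ln_increasing _ _ x_gt0)/Rlt_le | ->] //;
  apply: Rle_refl.
Qed.

Lemma ln_le_sub1 x : 0 < x -> ln x <= x - 1.
Proof.
move=> x_gt0; rewrite -[X in X - 1](exp_ln x) //.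
have := exp_ineq1_le (ln x); lra.
Qed.

Lemma exp_pow_nat x n : exp x ^ n = exp (INR n * x).
Proof. by rewrite -Rpower_pow ?/Rpower ?ln_exp //; apply: exp_pos. Qed.

Lemma qof_bounds p : 0 < p < 1 / 10 -> p <= qof p < 1 / 9.
Proof.
move=> hp; rewrite /qof; split.
  have /ln_le_sub1 : 0 < 1 - p by lra.
  lra.
have inv_gt0 : 0 < / (1 - p) by apply: Rinv_0_lt_compat; lra.
have := ln_le_sub1 inv_gt0; rewrite ln_Rinv; last lra.
have : / (1 - p) < 10 / 9.
  rewrite -[10 / 9]Rinv_div; apply: Rinv_lt_contravar; lra.
lra.
Qed.

(* With the tilt [t = 1 + 1 / (a p)] one has [p (t - 1) = 1 / a]. *)
Lemma chernoff_ratio_le (p a : R) (n m : nat) : 0 < p -> 0 < a ->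
  (1 + p * (1 + / (a * p) - 1)) ^ n / (1 + / (a * p)) ^ m <= exp (INR n / a) * (a * p) ^ m.
Proof.
move=> p_gt0 a_gt0; have ap_gt0 : 0 < a * p by apply: Rmult_lt_0_compat.
have inv_ap_gt0 := Rinv_0_lt_compat _ ap_gt0.
have -> : p * (1 + / (a * p) - 1) = / a by field; lra.
rewrite /Rdiv -pow_inv; apply: Rmult_le_compat.
- by apply: pow_le; have := Rinv_0_lt_compat _ a_gt0; lra.
- by apply: pow_le; apply: Rlt_le; apply: Rinv_0_lt_compat; lra.
- rewrite -exp_pow_nat; apply: pow_incr; split.
    by have := Rinv_0_lt_compat _ a_gt0; lra.
  exact: exp_ineq1_le.
- apply: pow_incr; split; first by apply: Rlt_le; apply: Rinv_0_lt_compat; lra.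
  rewrite -[X in _ <= X]Rinv_inv; apply: Rinv_le_contravar => //; lra.
Qed.

Lemma sqrt_exp x : sqrt (exp x) = exp (x / 2).
Proof.
have -> : exp x = exp (x / 2) * exp (x / 2) by rewrite -exp_plus; f_equal; field.
by rewrite sqrt_square //; apply: Rlt_le; apply: exp_pos.
Qed.

Lemma chernoff_term_le (p u L a : R) (n m : nat) :
  0 < p -> p * u <= 1 -> u = exp L -> 12 <= L -> sqrt u <= a < sqrt u + 1 ->
  INR n <= (2 * INR m + 11) * a ->
  (1 + p * (1 + / (a * p) - 1)) ^ n / (1 + / (a * p)) ^ m <= exp (11 - INR m * L / 4).
Proof.
move=> p_gt0 pu_le1 u_def L_ge12 [a_lo a_hi] n_le.
have s_def : sqrt u = exp (L / 2) by rewrite u_def sqrt_exp.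
have s_ge1 : 1 <= sqrt u by rewrite s_def; have := exp_ineq1_le (L / 2); lra.
have s_sq : sqrt u * sqrt u = u by apply: sqrt_sqrt; rewrite u_def; apply/Rlt_le/exp_pos.
have a_gt0 : 0 < a by lra.
have m_ge0 := pos_INR m.
apply: Rle_trans (chernoff_ratio_le n m p_gt0 a_gt0) _.
have exp_n_le : exp (INR n / a) <= exp 11 * exp 2 ^ m.
  rewrite exp_pow_nat -exp_plus; apply: exp_le_compat.
  apply: (Rmult_le_reg_r a) => //; rewrite /Rdiv Rmult_assoc Rinv_l; lra.
have ap_le : exp 2 * (a * p) <= exp (- (L / 4)).
  have aps_le2 : a * p * sqrt u <= 2.
    have : a * (p * sqrt u) <= 2 * sqrt u * (p * sqrt u).
      by apply: Rmult_le_compat_r; [apply: Rmult_le_pos|]; lra.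
    rewrite -s_sq in pu_le1; lra.
  have exp_quarter : 2 * exp 2 <= exp (- (L / 4)) * sqrt u.
    rewrite s_def -exp_plus (_ : - (L / 4) + L / 2 = 2 + (L / 4 - 2)); last field.
    rewrite exp_plus; have := exp_ineq1_le (L / 4 - 2); have := exp_pos 2; nra.
  have := exp_pos 2; nra.
have -> : exp (11 - INR m * L / 4) = exp 11 * exp (- (L / 4)) ^ m.
  by rewrite exp_pow_nat -exp_plus; f_equal; field.
apply: Rle_trans (Rmult_le_compat_r _ _ _ _ exp_n_le) _.
  by apply: pow_le; apply: Rlt_le; apply: Rmult_lt_0_compat.
rewrite Rmult_assoc -Rpow_mult_distr; apply: Rmult_le_compat_l.
  by apply: Rlt_le; apply: exp_pos.
apply: pow_incr; split=> //; apply: Rmult_le_pos; [apply/Rlt_le/exp_pos | nra].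
Qed.

Lemma small_q_bound (p u L a b K c : R) (n m : nat) :
  0 < p -> p * u <= 1 -> u = exp L -> 20 <= L ->
  sqrt u <= a < sqrt u + 1 -> u * L - 1 < b <= u * L ->
  INR n <= (b - a) * a -> b - a - 11 <= 2 * INR m ->
  0 <= K <= (2 * (a + b) + 1) ^ 4 -> c <= / 32 ->
  K * ((1 + p * (1 + / (a * p) - 1)) ^ n / (1 + / (a * p)) ^ m) <= exp (- (c * u * L ^ 2)).
Proof.
move=> p_gt0 pu_le1 u_def L_ge20 a_bounds [b_lo b_hi] n_le m_ge [K_ge0 K_le] c_le.
have u_ge : 1 + L <= u by rewrite u_def; apply: exp_ineq1_le.
have s_sq : sqrt u * sqrt u = u by apply: sqrt_sqrt; lra.
have s_ge0 := sqrt_pos u.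
have s_le_u : sqrt u <= u by nra.
have uL_ge : 20 * u <= u * L by nra.
have term := chernoff_term_le (n := n) (m := m) p_gt0 pu_le1 u_def ltac:(lra) a_bounds ltac:(nra).
have K_le_exp : K <= exp (12 * L).
  have -> : exp (12 * L) = (u ^ 3) ^ 4.
    by rewrite u_def !exp_pow_nat; f_equal; simpl; ring.
  apply: Rle_trans K_le _; apply: pow_incr; split; first lra.
  have : 2 * u * u + 2 * u + 3 <= u * u * u by nra.
  have : L * u <= u * u by nra.
  simpl; nra.
have m_lo : u * L / 4 <= INR m by nra.
apply: Rle_trans (Rmult_le_compat_l _ _ _ K_ge0 term) _.
apply: Rle_trans (Rmult_le_compat_r _ _ _ (Rlt_le _ _ (exp_pos _)) K_le_exp) _.
rewrite -exp_plus; apply: exp_le_compat.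
have : 420 * L <= u * L * L by nra.
have : c * (u * L * L) <= / 32 * (u * L * L) by apply: Rmult_le_compat_r; nra.
simpl; nra.
Qed.

Definition box_size_max : R := (2 * (21 * exp 20 + 1) + 1) ^ 2.

(* For log q^-1 < 20, [exp (box_size_max * ln (9/10))] bounds [(1 - p) ^ #|box|]
   from below and [400 * exp 20] bounds [q^-1 (log q^-1)^2] from above. *)
Definition c_large : R := exp (box_size_max * ln (9 / 10)) / (400 * exp 20).

Lemma c_large_gt0 : 0 < c_large.
Proof.
apply: Rdiv_lt_0_compat; first exact: exp_pos.
by have := exp_pos 20; lra.
Qed.

Lemma large_q_bound (p u L a b c : R) (n : nat) :
  0 < p < 1 / 10 -> u = exp L -> 0 <= L < 20 ->
  0 <= a < sqrt u + 1 -> 0 <= b <= u * L -> INR n = (2 * (a + b) + 1) ^ 2 ->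
  c <= c_large -> 1 - (1 - p) ^ n <= exp (- (c * u * L ^ 2)).
Proof.
move=> p_bounds u_def L_bounds a_bounds b_bounds n_def c_le.
have u_ge1 : 1 <= u by rewrite u_def; have := exp_ineq1_le L; lra.
have u_lt : u < exp 20 by rewrite u_def; apply: exp_increasing; lra.
have s_le_u : sqrt u <= u.
  have s_sq : sqrt u * sqrt u = u by apply: sqrt_sqrt; lra.
  have := sqrt_pos u; nra.
have ln_lt0 : ln (9 / 10) < 0 by rewrite -ln_1; apply: ln_increasing; lra.
have n_le : INR n <= box_size_max.
  rewrite n_def /box_size_max; apply: pow_incr; split; first lra.
  have : L * u <= 20 * exp 20 by apply: Rmult_le_compat; lra.
  lra.
set delta := exp (box_size_max * ln (9 / 10)).
have delta_le : delta <= (1 - p) ^ n.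
  apply: Rle_trans (pow_incr (9 / 10) (1 - p) n _); last lra.
  rewrite -[9 / 10]exp_ln ?exp_pow_nat ?ln_exp; last lra.
  by apply: exp_le_compat; nra.
apply: (Rle_trans _ (exp (- delta))); first by have := exp_ineq1_le (- delta); lra.
apply: exp_le_compat; apply: Ropp_le_contravar.
have uL2_le : u * L ^ 2 <= 400 * exp 20.
  have : L ^ 2 <= 400 by simpl; nra.
  have : 0 <= L ^ 2 by apply: pow2_ge_0.
  nra.
have c_large_def : c_large * (400 * exp 20) = delta.
  by rewrite /c_large /delta; field; have := exp_pos 20; lra.
have := c_large_gt0; have : 0 <= u * L ^ 2 by apply: Rmult_le_pos; [lra | apply: pow2_ge_0].
nra.
Qed.

Lemma PE_le_compl_empty p : 0 < p < 1 -> (12 <= Bof p - Aof p)%Z ->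
  PE p <= 1 - (1 - p) ^ #|{: site (boxN p)}|.
Proof.
move=> [p_gt0 p_lt1] gap; rewrite RpowE; apply/RleP.
by apply: prob_le_compl_empty (@event_E_empty _ _ _ gap); apply/RleP/Rlt_le.
Qed.

Lemma PE_le_chernoff p t (m : nat) : 0 < p < 1 -> 1 <= t ->
  (2 * Z.of_nat m <= Bof p - Aof p - 10)%Z ->
  PE p <= INR #|{: site (boxN p) * site (boxN p)}| *
          ((1 + p * (t - 1)) ^ Z.to_nat ((Bof p - Aof p) * Aof p) / t ^ m).
Proof.
move=> [p_gt0 p_lt1] t_ge1 hm; rewrite !RpowE INRE; apply/RleP.
apply: prob_box_event_E_le hm; [exact/RleP/Rlt_le | exact/RleP/Rlt_le | exact/RleP |].
by rewrite /boxN Z2Nat.id; lia.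
Qed.

Lemma Aof_bounds p : 0 < p < 1 / 10 -> sqrt (/ qof p) <= IZR (Aof p) < sqrt (/ qof p) + 1.
Proof.
move=> /qof_bounds q_bounds.
have : IZR (Aof p) - 1 < / sqrt (qof p) <= IZR (Aof p) := Zceil_bound _.
rewrite sqrt_inv; lra.
Qed.

Lemma Bof_bounds p : / qof p * ln (/ qof p) - 1 < IZR (Bof p) <= / qof p * ln (/ qof p).
Proof.
have : IZR (Bof p) <= / qof p * ln (/ qof p) < IZR (Bof p) + 1 := Zfloor_bound _.
lra.
Qed.

Lemma inv_qof_bounds p : 0 < p < 1 / 10 -> 9 < / qof p /\ p * / qof p <= 1.
Proof.
move=> p_bounds; have [p_le_q q_lt] := qof_bounds p_bounds; split.
  by rewrite -[9]Rinv_inv; apply: Rinv_lt_contravar; lra.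
rewrite -(Rinv_r (qof p)); last lra.
by apply: Rmult_le_compat_r => //; apply/Rlt_le/Rinv_0_lt_compat; lra.
Qed.

Lemma Aof_Bof_bounds p : 0 < p < 1 / 10 ->
  (1 <= Aof p)%Z /\ (12 <= Bof p - Aof p)%Z.
Proof.
move=> p_bounds; have [u_gt9 _] := inv_qof_bounds p_bounds.
have := Aof_bounds p_bounds; have := Bof_bounds p.
set u := / qof p in u_gt9 * => b_bounds a_bounds.
have L_ge2 : 2 <= ln u.
  rewrite -[2]ln_exp; apply: ln_le_compat; first exact: exp_pos.
  rewrite (_ : 2 = 1 + 1) // exp_plus; have := exp_le_3; have := exp_pos 1; nra.
have s_sq : sqrt u * sqrt u = u by apply: sqrt_sqrt; lra.
have s_ge3 : 3 <= sqrt u by have := sqrt_pos u; nra.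
split.
  suff /lt_IZR : 0 < IZR (Aof p) by lia.
  lra.
suff /lt_IZR : 11 < IZR (Bof p - Aof p) by lia.
rewrite minus_IZR; nra.
Qed.

Lemma INR_card_box p : 0 < p < 1 / 10 ->
  INR #|{: site (boxN p)}| = (2 * (IZR (Aof p) + IZR (Bof p)) + 1) ^ 2.
Proof.
move=> /Aof_Bof_bounds [A_ge1 gap].
rewrite card_prod card_ord mult_INR S_INR -addnn plus_INR /boxN INR_IZR_INZ.
by rewrite Z2Nat.id ?Z.abs_eq ?plus_IZR /=; [ring | lia ..].
Qed.

Lemma half_nat (z : Z) : (0 <= z)%Z ->
  exists m : nat, (2 * Z.of_nat m <= z)%Z /\ IZR z - 1 <= 2 * INR m.
Proof.
move=> z_ge0; exists (Z.to_nat (z / 2)); rewrite INR_IZR_INZ Z2Nat.id; last first.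
  by apply: Z.div_pos; lia.
split; first exact: Z.mul_div_le.
rewrite -mult_IZR -minus_IZR; apply: IZR_le.
by have := Z.mod_pos_bound z 2; have := Z.div_mod z 2; lia.
Qed.

Lemma PE_le_large p c : 0 < p < 1 / 10 -> ln (/ qof p) < 20 -> c <= c_large ->
  PE p <= exp (- (c * / qof p * (ln (/ qof p)) ^ 2)).
Proof.
move=> p_bounds L_lt20 c_le; have [u_gt9 _] := inv_qof_bounds p_bounds.
have [A_ge1 gap] := Aof_Bof_bounds p_bounds.
have a_bounds := Aof_bounds p_bounds; have b_bounds := Bof_bounds p.
have L_gt0 : 0 < ln (/ qof p) by rewrite -ln_1; apply: ln_increasing; lra.
have uL_ge0 : 0 <= / qof p * ln (/ qof p) by apply: Rmult_le_pos; lra.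
apply: Rle_trans (PE_le_compl_empty _ gap) _; first lra.
have /IZR_le B_ge0 : (0 <= Bof p)%Z by lia.
have s_ge0 := sqrt_pos (/ qof p).
by apply: large_q_bound (INR_card_box p_bounds) c_le; rewrite ?exp_ln; lra.
Qed.

Lemma PE_le_small p c : 0 < p < 1 / 10 -> 20 <= ln (/ qof p) -> c <= / 32 ->
  PE p <= exp (- (c * / qof p * (ln (/ qof p)) ^ 2)).
Proof.
move=> p_bounds L_ge20 c_le; have [u_gt9 pu_le1] := inv_qof_bounds p_bounds.
have [A_ge1 gap] := Aof_Bof_bounds p_bounds.
have [m [hm m_ge]] := half_nat (z := (Bof p - Aof p - 10)%Z) ltac:(lia).
rewrite 2!minus_IZR in m_ge.
have inv_gt0 : 0 < / (IZR (Aof p) * p).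
  by apply/Rinv_0_lt_compat/Rmult_lt_0_compat; [apply: IZR_lt; lia | lra].
apply: Rle_trans (PE_le_chernoff (t := 1 + / (IZR (Aof p) * p)) _ _ hm) _; try lra.
apply: small_q_bound (Aof_bounds p_bounds) (Bof_bounds p) _ _ _ c_le; try lra.
- by rewrite exp_ln; lra.
- by rewrite INR_IZR_INZ Z2Nat.id ?mult_IZR ?minus_IZR; [apply: Req_le | nia].
- rewrite card_prod mult_INR INR_card_box //; split; last by apply: Req_le; ring.
  by apply: Rmult_le_pos; apply: pow2_ge_0.
Qed.

Theorem lemma7 :
  exists c : R, 0 < c /\
    forall p : R, 0 < p < 1 / 10 ->
      PE p <= exp (- (c * / qof p * (ln (/ qof p)) ^ 2)).
Proof.
exists (Rmin (/ 32) c_large); split; first by apply: Rmin_pos; [lra | exact: c_large_gt0].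
move=> p p_bounds; case: (Rlt_or_le (ln (/ qof p)) 20) => L_cases.
- exact: PE_le_large (Rmin_r _ _).
- exact: PE_le_small (Rmin_l _ _).
Qed.
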